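(* Let $\mathcal{D}=(\gamma,s_0,(E_i)_{i\in N})$ be a PPD, $i\in N$, $\omega$ an $\mathrm{LTL}_f$ formula, $s$ a state, $\pi_1$ a joint $k$-plan for $N$ and $\pi$ an individual $k$-plan for $i$. Then: (1) if $i$ bears AAR for $\omega$ in $(\pi_1,s)$ then $i$ bears CAR for $\omega$ in $(\pi_1,s)$; (2) if $i$ bears CAR for $\omega$ in $(\pi_1,s)$ then $i$ bears CCR for $\omega$ in $(\pi_1,s)$; (3) if $i$ bears CPR for $\omega$ in $(\pi_1,s)$ then $i$ bears CCR for $\omega$ in $(\pi_1,s)$; (4) for each $X\in\{\mathrm{CAR},\mathrm{CPR},\mathrm{CCR},\mathrm{AAR}\}$, if $s\in E_i$ and $i$ bears $X$ for $\omega$ in $(\pi_1,s)$, then $i$ anticipates $X$ for $\omega$ in $\pi_1^{\{i\}}$; (5) if $i$ anticipates AAR for $\omega$ in $\pi$ then $i$ anticipates CAR; if $i$ anticipates CAR then $i$ anticipates CCR; if $i$ anticipates CPR then $i$ anticipates CCR (all for $\omega$ in $\pi$); (6) $i$ anticipates CCR for $\omega$ in $\pi$ if and only if $i$ anticipates CPR for $\omega$ in $\pi$.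
   Context: Let $N$ be a finite set of agents, $P$ a finite set of propositional atoms, $S=2^P$ the set of states, and $A$ a finite nonempty set of action names containing a distinguished action $\mathit{skip}$. The language $\mathcal{L}_{PL+}$ is generated by $\phi ::= p \mid do(i,a) \mid \neg\phi \mid \phi\wedge\phi$ ($p\in P$, $i\in N$, $a\in A$). A $k$-history is a pair $H=(H_{st},H_{act})$ with $H_{st}:\{0,\dots,k\}\to S$ and $H_{act}:N\times\{0,\dots,k-1\}\to A$; $H,t\models p$ iff $p\in H_{st}(t)$, $H,t\models do(i,a)$ iff $t<k$ and $H_{act}(i,t)=a$, Boolean connectives as usual. An action theory is a pair $\gamma=(\gamma^+,\gamma^-)$ of functions $N\times A\times P\to\mathcal{L}_{PL+}$ with $\gamma^{+}(i,\mathit{skip},p)=\gamma^{-}(i,\mathit{skip},p)=\bot$. A $k$-history $H$ is $\gamma$-compatible if for every $t<k$, $H_{st}(t+1)=(H_{st}(t)\setminus D_t)\cup U_t$, where $D_t$ is the set of $p$ with $H,t\models\gamma^-(i,H_{act}(i,t),p)$ for some $i$ and $H,t\models\neg\gamma^+(j,H_{act}(j,t),p)$ for all $j$, and $U_t$ is the set of $p$ with $H,t\models\gamma^+(i,H_{act}(i,t),p)$ for some $i$ and $H,t\models\neg\gamma^-(j,H_{act}(j,t),p)$ for all $j$. A joint $k$-plan for a coalition $J\subseteq N$ is a function $\pi$ assigning to each $i\in J$ a sequence $\pi(i):\{0,\dots,k-1\}\to A$ (an individual plan if $J=\{i\}$). For $J'\subseteq J$, $\pi^{J'}$ is the restriction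 of $\pi$ to $J'$ and $\pi^{-J'}=\pi^{J\setminus J'}$. A joint $k$-plan $\pi_2$ for $N$ is compatible with a $k$-plan $\pi_1$ for $J$ if $\pi_2^J=\pi_1$ (every joint $k$-plan for $N$ is compatible with the plan of the empty coalition). For a state $s$, $H^{\pi,s,\gamma}$ is the unique $\gamma$-compatible $k$-history with $H_{st}(0)=s$ and $H_{act}(i,t)=\pi(i)(t)$. $\mathrm{LTL}_f$ formulas: $\phi::=p\mid do(i,a)\mid\neg\phi\mid\phi\wedge\phi\mid X\phi\mid\phi\,U\,\phi$, with $H,t\models X\phi$ iff $t<k$ and $H,t+1\models\phi$, and $H,t\models\phi_1U\phi_2$ iff there is $t'$ with $t\le t'\le k$, $H,t'\models\phi_2$ and $H,t''\models\phi_1$ for all $t\le t''<t'$; $F\phi:=\top U\phi$, $G\phi:=\neg F\neg\phi$; $H\models\phi$ means $H,0\models\phi$. A PPD (partial information multi-agent planning domain) is $\mathcal{D}=(\gamma,s_0,(E_i)_{i\in N})$ with $\gamma$ an action theory, $s_0\in S$ the initial state, and $E_i\subseteq S$ the set of initial states agent $i$ considers possible. Throughout, a horizon $k$ is fixed and ''joint plan'' means joint $k$-plan for $N$. For $i\in N$, a joint plan $\pi_1$, a state $s$ and an $\mathrm{LTL}_f$ formula $\omega$: - $i$ bears Causal Active Responsibility (CAR) for $\omega$ in $(\pi_1,s)$ if $H^{\pi_2,s,\gamma}\models\omega$ for every joint plan $\pi_2$ compatible with $\pi_1^{\{i\}}$, and there is a joint plan $\pi_3$ with $H^{\pi_3,s,\gamma}\not\models\omega$;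 - $i$ bears Causal Passive Responsibility (CPR) for $\omega$ in $(\pi_1,s)$ if $H^{\pi_1,s,\gamma}\models\omega$ and there is a joint plan $\pi_2$ compatible with $\pi_1^{-\{i\}}$ with $H^{\pi_2,s,\gamma}\not\models\omega$; - $i$ bears Causal Contributive Responsibility (CCR) for $\omega$ in $(\pi_1,s)$ if $H^{\pi_1,s,\gamma}\models\omega$ and there is a coalition $J\subseteq N$ with $i\in J$ such that $H^{\pi_2,s,\gamma}\models\omega$ for every joint plan $\pi_2$ compatible with $\pi_1^J$, and there is a joint plan $\pi_3$ compatible with $\pi_1^{J\setminus\{i\}}$ with $H^{\pi_3,s,\gamma}\not\models\omega$; - $i$ bears Agentive Active Responsibility (AAR) for $\omega$ in $(\pi_1,s)$ if $i$ bears CAR for $\omega$ in $(\pi_1,s)$ and $H^{\pi_2,s',\gamma}\models\omega$ for every joint plan $\pi_2$ compatible with $\pi_1^{\{i\}}$ and every $s'\in E_i$. For an individual $k$-plan $\pi$ of $i$ and $X\in\{\mathrm{CAR},\mathrm{CPR},\mathrm{CCR},\mathrm{AAR}\}$, $i$ anticipates $X$ for $\omega$ in $\pi$ if there exist $s_1\in E_i$ and a joint plan $\pi_1$ compatible with $\pi$ such that $i$ bears $X$ for $\omega$ in $(\pi_1,s_1)$. *)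

From mathcomp Require Import all_boot.
Set Implicit Arguments. Unset Strict Implicit. Unset Printing Implicit Defensive.

Section PPD.
Variables (N P A : finType) (skip : A) (k : nat).

Definition state := {set P}.

Inductive PLf : Type :=
| PAtom of P
| PDo of N & A
| PNot of PLf
| PAnd of PLf & PLf.

Inductive LTLf : Type :=
| LAtom of P
| LDo of N & A
| LNot of LTLf
| LAnd of LTLf & LTLf
| LX of LTLf
| LU of LTLf & LTLf.

(* k-histories: H_st on {0..k}, H_act on N x {0..k-1}; values outside these
   ranges are never consulted by the semantics. *)
Record history := Hist { hst : nat -> state; hact : N -> nat -> A }.

Fixpoint evalPL (st : state) (act : N -> nat -> A) (t : nat) (f : PLf) : bool :=
  match f with
  | PAtom p => p \in st
  | PDo i a => (t < k) && (act i t == a)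
  | PNot g => ~~ evalPL st act t g
  | PAnd g h => evalPL st act t g && evalPL st act t h
  end.

Definition holdsPL (H : history) (t : nat) (f : PLf) : bool :=
  evalPL (hst H t) (hact H) t f.

(* Action theories gamma = (gamma+, gamma-), with gamma^{+/-}(i,skip,p) = bottom
   (rendered semantically: never true). *)
Record action_theory := ActionTheory {
  gplus : N -> A -> P -> PLf;
  gminus : N -> A -> P -> PLf;
  gplus_skip : forall i p st act t, evalPL st act t (gplus i skip p) = false;
  gminus_skip : forall i p st act t, evalPL st act t (gminus i skip p) = false
}.

Section Update.
Variable gam : action_theory.

Definition Dset (st : state) (act : N -> nat -> A) (t : nat) : state :=
  [set p | [exists i, evalPL st act t (gminus gam i (act i t) p)] &&
           [forall j, ~~ evalPL st act t (gplus gam j (act j t) p)]].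

Definition Uset (st : state) (act : N -> nat -> A) (t : nat) : state :=
  [set p | [exists i, evalPL st act t (gplus gam i (act i t) p)] &&
           [forall j, ~~ evalPL st act t (gminus gam j (act j t) p)]].

Definition gamma_compatible (H : history) : Prop :=
  forall t, t < k ->
    hst H t.+1 = (hst H t :\: Dset (hst H t) (hact H) t) :|: Uset (hst H t) (hact H) t.

Definition jplan := N -> 'I_k -> A.
Definition iplan := 'I_k -> A.

Definition plan_act (pi : jplan) : N -> nat -> A :=
  fun i t => match (insub t : option 'I_k) with Some o => pi i o | None => skip end.

Fixpoint run_states (act : N -> nat -> A) (s : state) (t : nat) : state :=
  match t with
  | 0 => s
  | t'.+1 =>
      let st := run_states act s t' in
      (st :\: Dset st act t') :|: Uset st act t'
  end.

Definition hist_of (pi : jplan) (s : state) : history :=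
  Hist (run_states (plan_act pi) s) (plan_act pi).

End Update.

Fixpoint sat (H : history) (t : nat) (f : LTLf) : Prop :=
  match f with
  | LAtom p => p \in hst H t
  | LDo i a => t < k /\ hact H i t = a
  | LNot g => ~ sat H t g
  | LAnd g h => sat H t g /\ sat H t h
  | LX g => t < k /\ sat H t.+1 g
  | LU g h => exists t', [/\ t <= t', t' <= k, sat H t' h &
                         forall t'', t <= t'' -> t'' < t' -> sat H t'' g]
  end.

Definition models (H : history) (f : LTLf) : Prop := sat H 0 f.

Record PPD := MkPPD { gamma : action_theory; s0 : state; Eset : N -> {set state} }.

Definition agree_on (J : {set N}) (pi1 pi2 : jplan) : Prop :=
  forall j, j \in J -> forall t, pi2 j t = pi1 j t.

Section Resp.
Variable D : PPD.
Let H (pi : jplan) (s : state) := hist_of (gamma D) pi s.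

Definition CAR (i : N) (w : LTLf) (pi1 : jplan) (s : state) : Prop :=
  (forall pi2, agree_on [set i] pi1 pi2 -> models (H pi2 s) w) /\
  (exists pi3, ~ models (H pi3 s) w).

Definition CPR (i : N) (w : LTLf) (pi1 : jplan) (s : state) : Prop :=
  models (H pi1 s) w /\
  (exists pi2, agree_on (~: [set i]) pi1 pi2 /\ ~ models (H pi2 s) w).

Definition CCR (i : N) (w : LTLf) (pi1 : jplan) (s : state) : Prop :=
  models (H pi1 s) w /\
  exists J : {set N}, [/\ i \in J,
     (forall pi2, agree_on J pi1 pi2 -> models (H pi2 s) w) &
     (exists pi3, agree_on (J :\ i) pi1 pi3 /\ ~ models (H pi3 s) w)].

Definition AAR (i : N) (w : LTLf) (pi1 : jplan) (s : state) : Prop :=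
  CAR i w pi1 s /\
  (forall pi2 s', agree_on [set i] pi1 pi2 -> s' \in Eset D i ->
     models (H pi2 s') w).

Inductive resp_kind := KCAR | KCPR | KCCR | KAAR.

Definition bears (X : resp_kind) : N -> LTLf -> jplan -> state -> Prop :=
  match X with KCAR => CAR | KCPR => CPR | KCCR => CCR | KAAR => AAR end.

Definition anticipates (X : resp_kind) (i : N) (w : LTLf) (pi : iplan) : Prop :=
  exists s1, s1 \in Eset D i /\
  exists pi1 : jplan, (forall t, pi1 i t = pi t) /\ bears X i w pi1 s1.

End Resp.
End PPD.

From mathcomp Require Import all_boot.
From Stdlib Require Import FunctionalExtensionality.
Set Implicit Arguments. Unset Strict Implicit. Unset Printing Implicit Defensive.

(* Pointwise: AAR implies CAR by definition; CAR implies CCR with the coalition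
   {i} (its version without i is empty, so the counter-plan of CAR serves); CPR
   implies CCR with the grand coalition N, which pins down the whole joint plan.
   Anticipation is monotone in the responsibility notion, which yields (5), and
   a responsibility borne in an initial state that i considers possible is
   anticipated, which is (4).  The converse CCR ==> CPR fails pointwise but holds
   for anticipation (6): from a CCR witness (pi1, J, pi3) build the joint plan
   that follows pi1 for agent i and pi3 for everybody else.  It agrees with pi1
   on J, so it satisfies w, while pi3 is a deviation of i alone that falsifies
   w; hence i bears CPR in it, and i's individual plan is unchanged. *)

Section Agreement.
Variables (N A : finType) (k : nat).
Implicit Types (p q : N -> 'I_k -> A).

Lemma agree_on_set0 p q : agree_on set0 p q.
Proof. by move=> j; rewrite inE. Qed.

Lemma agree_on_setT p q : agree_on setT p q -> q = p.
Proof.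
move=> ag; apply: functional_extensionality => j.
by apply: functional_extensionality => t; apply: ag; rewrite in_setT.
Qed.

Definition override (i : N) (a : 'I_k -> A) q : N -> 'I_k -> A :=
  fun j => if j == i then a else q j.

Lemma override_self i a q : override i a q i = a.
Proof. by rewrite /override eqxx. Qed.

Lemma agree_on_override i a q : agree_on (~: [set i]) (override i a q) q.
Proof. by move=> j; rewrite !inE /override => /negbTE ->. Qed.

End Agreement.

Section Responsibility.
Variables (N P A : finType) (skip : A) (k : nat) (D : PPD N P skip k).
Variables (i : N) (w : LTLf N P A).
Implicit Types (p : N -> 'I_k -> A) (s : {set P}).

Lemma AAR_CAR p s : AAR D i w p s -> CAR D i w p s.
Proof. by case. Qed.

Lemma CAR_CCR p s : CAR D i w p s -> CCR D i w p s.
Proof.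
move=> [forced [p3 fails]]; split; first exact: forced.
exists [set i]; split; [by rewrite inE | exact: forced |].
by exists p3; split=> //; rewrite setDv; exact: agree_on_set0.
Qed.

Lemma CPR_CCR p s : CPR D i w p s -> CCR D i w p s.
Proof.
move=> [holds [p2 [ag2 fails]]]; split=> //.
exists setT; split; first by rewrite in_setT.
  by move=> p' /agree_on_setT ->.
by exists p2; split=> //; rewrite setTD.
Qed.

(* A CCR witness becomes a CPR witness once the other agents adopt the
   counter-plan, without changing agent i's individual plan. *)
Lemma CCR_to_CPR p s :
  CCR D i w p s -> exists p', p' i = p i /\ CPR D i w p' s.
Proof.
move=> [_ [J [iJ forced [p3 [ag3 fails]]]]].
exists (override i (p i) p3); split; first exact: override_self.
split; last by exists p3; split=> //; exact: agree_on_override.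
apply: forced => j jJ t; rewrite /override.
by case: eqP => [-> //|/eqP ji]; apply: ag3; rewrite !inE ji.
Qed.

Lemma anticipates_mono (X Y : resp_kind) (pi : 'I_k -> A) :
  (forall p s, bears D X i w p s -> bears D Y i w p s) ->
  anticipates D X i w pi -> anticipates D Y i w pi.
Proof.
move=> XY [s1 [Es1 [p [pi_p bX]]]].
by exists s1; split=> //; exists p; split=> //; exact: XY.
Qed.

Lemma bears_anticipates (X : resp_kind) p s :
  s \in Eset D i -> bears D X i w p s -> anticipates D X i w (p i).
Proof. by move=> Es bX; exists s; split=> //; exists p. Qed.

Lemma anticipates_CCR_CPR (pi : 'I_k -> A) :
  anticipates D KCCR i w pi -> anticipates D KCPR i w pi.
Proof.
move=> [s1 [Es1 [p [pi_p /CCR_to_CPR [p' [p'i bCPR]]]]]].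
by exists s1; split=> //; exists p'; split=> // t; rewrite p'i.
Qed.

End Responsibility.

Theorem theorem2 (N P A : finType) (skip : A) (k : nat)
  (D : PPD N P skip k) (i : N) (w : LTLf N P A) (s : {set P})
  (pi1 : N -> 'I_k -> A) (pi : 'I_k -> A) :
  (* (1) *) (AAR D i w pi1 s -> CAR D i w pi1 s) /\
  (* (2) *) (CAR D i w pi1 s -> CCR D i w pi1 s) /\
  (* (3) *) (CPR D i w pi1 s -> CCR D i w pi1 s) /\
  (* (4) *) (forall X : resp_kind, s \in Eset D i -> bears D X i w pi1 s ->
               anticipates D X i w (pi1 i)) /\
  (* (5) *) ((anticipates D KAAR i w pi -> anticipates D KCAR i w pi) /\
             (anticipates D KCAR i w pi -> anticipates D KCCR i w pi) /\
             (anticipates D KCPR i w pi -> anticipates D KCCR i w pi)) /\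
  (* (6) *) (anticipates D KCCR i w pi <-> anticipates D KCPR i w pi).
Proof.
split; first exact: AAR_CAR.
split; first exact: CAR_CCR.
split; first exact: CPR_CCR.
split; first by move=> X; exact: bears_anticipates.
split; first split; [| split |].
- by apply: anticipates_mono; exact: AAR_CAR.
- by apply: anticipates_mono; exact: CAR_CCR.
- by apply: anticipates_mono; exact: CPR_CCR.
- split; first exact: anticipates_CCR_CPR.
  by apply: anticipates_mono; exact: CPR_CCR.
Qed.
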